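(* Let $G$ be a finite semi-3-abelian 3-group and let $x\in\Omega_{1}(G)$. Then for all $a,b\in G$, $$[x,b,a]\,[x,a,b]=1.$$
   Context: A finite 3-group $G$ is semi-3-abelian if for all $a,b\in G$: $(ab)^{3}=1$ if and only if $a^{3}b^{3}=1$. $\Omega_{1}(G)=\langle g\in G : g^{3}=1\rangle$. Commutators: $[x,y]=x^{-1}y^{-1}xy$, and left-normed $[x_1,\dots,x_n]=[[x_1,\dots,x_{n-1}],x_n]$. *)

From mathcomp Require Import all_boot all_fingroup all_solvable.
Set Implicit Arguments. Unset Strict Implicit. Unset Printing Implicit Defensive.
Local Open Scope group_scope.

Definition semi3abelian (gT : finGroupType) (G : {set gT}) : Prop :=
  forall a b, a \in G -> b \in G -> ((a * b) ^+ 3 == 1) = (a ^+ 3 * b ^+ 3 == 1).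

(* In a semi-3-abelian 3-group the elements of order dividing 3 form the group
   Omega_1, and for u of order 3 the identity (ug)^3 = g^3 says
   u^(g^2) u^g u = 1.  Hence the normal closure K of x is abelian of exponent 3
   and every g acts on it as 1 + d_g with d_g^2 = 0, since T^2 + T + 1 = (T - 1)^2
   modulo 3.  Expanding d_(ab)^2 = 0 with d_(ab) = d_a + d_b + d_a d_b and
   evaluating it at u, d_a u and d_b u shows d_b d_a d_b = 0 and then
   d_a d_b + d_b d_a = 0 on K. *)

From mathcomp Require Import all_boot all_fingroup all_solvable.
Set Implicit Arguments. Unset Strict Implicit. Unset Printing Implicit Defensive.
Local Open Scope group_scope.

Section SquareZeroDerivations.
Variables (gT : finGroupType) (K : {group gT}) (da db dab : gT -> gT).
Hypotheses (daK : {in K, forall u, da u \in K}) (dbK : {in K, forall u, db u \in K}).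
Hypotheses (daM : {in K &, {morph da : u v / u * v}})
           (dbM : {in K &, {morph db : u v / u * v}})
           (dabM : {in K &, {morph dab : u v / u * v}}).
Hypotheses (da2 : {in K, forall u, da (da u) = 1})
           (db2 : {in K, forall u, db (db u) = 1})
           (dab2 : {in K, forall u, dab (dab u) = 1}).
Hypothesis dabE : {in K, forall u, dab u = da u * db u * db (da u)}.

Lemma in_morph1 (d : gT -> gT) : {in K &, {morph d : u v / u * v}} -> d 1 = 1.
Proof. by move=> dM; apply: (mulIg (d 1)); rewrite -dM // !mul1g. Qed.

Lemma square_zero_expand u : u \in K ->
  db (da u) * (da (db u) * db (da (db u))) * (da (db (da u)) * db (da (db (da u)))) = 1.
Proof.
move=> uK; have [AK BK] := (daK uK, dbK uK); have CK := dbK AK.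
have := dab2 uK; rewrite (dabE uK) !dabM ?groupM // !dabE ?daK ?dbK //.
by rewrite !da2 ?db2 // (in_morph1 dbM) !mul1g !mulg1.
Qed.

Lemma square_zero_triple u : u \in K -> da (db (da u)) * db (da (db (da u))) = 1.
Proof.
move=> uK; have := square_zero_expand (daK uK).
by rewrite !da2 // !(in_morph1 dbM) (in_morph1 daM) (in_morph1 dbM) !mul1g mulg1.
Qed.

Lemma square_zero_pair u : u \in K -> db (da u) * (da (db u) * db (da (db u))) = 1.
Proof. by move=> uK; have := square_zero_expand uK; rewrite square_zero_triple ?mulg1. Qed.

Lemma square_zero_comm u : u \in K -> da (db u) * db (da u) = 1.
Proof.
move=> uK; have BK := dbK uK.
have dbadb1 : db (da (db u)) = 1.
  have := square_zero_pair BK.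
  by rewrite !db2 // !(in_morph1 daM) (in_morph1 dbM) !mulg1.
have := square_zero_pair uK; rewrite dbadb1 mulg1 => /eqP.
by rewrite mulg_eq1 => /eqP->; rewrite mulgV.
Qed.

End SquareZeroDerivations.

Section AbelianNormalCommutators.
Variables (gT : finGroupType) (K H : {group gT}).
Hypotheses (cKK : abelian K) (nKH : H \subset 'N(K)).

Lemma mem_commg_norm u g : u \in K -> g \in H -> [~ u, g] \in K.
Proof.
by move=> uK gH; apply: (subsetP _ _ (mem_commg uK gH)); rewrite commg_subl.
Qed.

Lemma commMg_abelian g : g \in H -> {in K &, {morph commg^~ g : u v / u * v}}.
Proof.
move=> gH u v uK vK; rewrite /= commMgJ; congr (_ * _).
by apply/conjg_fixP/commgP/(centsP cKK); rewrite ?mem_commg_norm.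
Qed.

Lemma commgM_abelian u g h :
  u \in K -> g \in H -> h \in H -> [~ u, g * h] = [~ u, g] * [~ u, h] * [~ u, g, h].
Proof.
move=> uK gH hH; rewrite commgMJ conjg_mulR mulgA; congr (_ * _).
by apply: (centsP cKK); rewrite ?mem_commg_norm.
Qed.

Lemma engel2_commgC u a b :
  (forall v g, v \in K -> g \in H -> [~ v, g, g] = 1) ->
  u \in K -> a \in H -> b \in H -> [~ u, b, a] * [~ u, a, b] = 1.
Proof.
move=> engelKH uK aH bH; have abH := groupM aH bH.
have dK g : g \in H -> {in K, forall v, [~ v, g] \in K}.
  by move=> gH v vK; apply: mem_commg_norm.
have d2 g : g \in H -> {in K, forall v, [~ v, g, g] = 1}.
  by move=> gH v vK; apply: engelKH.
exact: (square_zero_comm (dK a aH) (dK b bH) (commMg_abelian aH) (commMg_abelian bH)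
  (commMg_abelian abH) (d2 a aH) (d2 b bH) (d2 _ abH) (fun v vK => commgM_abelian vK aH bH) uK).
Qed.

End AbelianNormalCommutators.

(* Modulo 3, T^2 + T + 1 = (T - 1)^2 for the action T of g on K. *)
Lemma abelian_exp3_engel (gT : finGroupType) (K : {group gT}) u g :
    abelian K -> g \in 'N(K) -> u \in K -> u ^+ 3 = 1 ->
  u ^ (g * g) * u ^ g * u = 1 -> [~ u, g, g] = 1.
Proof.
move=> cKK nKg uK u3 /eqP; rewrite -mulgA mulg_eq1 invMg => /eqP ugg.
have yK : (u ^ g)^-1 \in K by rewrite groupV memJ_norm.
have y3 : (u ^ g) ^+ 3 = 1 by rewrite -conjXg u3 conj1g.
apply/eqP/conjg_fixP; rewrite !commgEl conjMg conjVg -conjgM ugg.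
rewrite mulgA (centsP cKK _ yK) ?groupV // -mulgA; congr (_ * _).
apply/eqP; rewrite -invMg eq_invg_mul -y3; set y := u ^ g.
by rewrite (expgS _ 2) expgS expg1 (mulgA y y y).
Qed.

Section SemiThreeAbelian.
Variables (gT : finGroupType) (G : {group gT}).
Hypothesis sG : semi3abelian G.

Lemma semi3abelian_cubeMl u g : u \in G -> g \in G -> u ^+ 3 = 1 -> (u * g) ^+ 3 = g ^+ 3.
Proof.
move=> uG gG u3; have := sG (groupM uG gG) (groupVr gG).
rewrite mulgK u3 eqxx expVgn => /esym.
by rewrite -eq_mulgV1 => /eqP.
Qed.

Lemma semi3abelian_Ldiv3_group : group_set 'Ldiv_3(G).
Proof.
apply/group_setP; split=> [|u v /LdivP[uG u3] /LdivP[vG v3]]; apply/LdivP.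
  by rewrite group1 expg1n.
by rewrite groupM // semi3abelian_cubeMl.
Qed.

Lemma semi3abelian_Ohm1 : 3.-group G -> 'Ohm_1(G) = 'Ldiv_3(G).
Proof. by move=> pG; rewrite (OhmE 1 pG) gen_set_id ?semi3abelian_Ldiv3_group. Qed.

Lemma semi3abelian_conj_cycle u g : u \in G -> g \in G -> u ^+ 3 = 1 ->
  u ^ (g * g) * u ^ g * u = 1.
Proof.
move=> uG gG u3; have := semi3abelian_cubeMl uG gG u3.
rewrite !expgS !expg0 !mulg1 => ug3.
have -> : u ^ (g * g) * u ^ g * u = (g * g)^-1 * ((u * g) * ((u * g) * (u * g))) * g^-1.
  by rewrite !conjgE !mulgA mulgK mulgK.
by rewrite ug3 !mulgA mulgK -mulgA mulVg.
Qed.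

Lemma semi3abelian_commute_conj u g : u \in G -> g \in G -> u ^+ 3 = 1 ->
  commute u (u ^ g).
Proof.
move=> uG gG u3.
have /eqP := semi3abelian_conj_cycle uG gG u3; rewrite -mulgA mulg_eq1 => /eqP e1.
have := semi3abelian_conj_cycle (groupVr uG) gG; rewrite expVgn u3 invg1 => /(_ erefl).
by rewrite !conjVg -!invMg => /eqP; rewrite invg_eq1 mulgA mulg_eq1 e1 invgK => /eqP.
Qed.

Lemma semi3abelian_class_abelian x : x \in G -> x ^+ 3 = 1 -> abelian <<x ^: G>>.
Proof.
move=> xG x3; rewrite abelian_gen; apply/centsP=> _ /imsetP[h hG ->] _ /imsetP[k kG ->].
have -> : x ^ k = (x ^ h) ^ (h^-1 * k) by rewrite -conjgM mulKVg.
by apply: semi3abelian_commute_conj; rewrite ?groupJ ?groupM ?groupV // -conjXg x3 conj1g.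
Qed.

End SemiThreeAbelian.

Theorem lemma3p1 (gT : finGroupType) (G : {group gT}) (x : gT) :
  3.-group G -> semi3abelian G -> x \in 'Ohm_1(G) ->
  forall a b, a \in G -> b \in G -> [~ x, b, a] * [~ x, a, b] = 1.
Proof.
move=> pG sG xO a b aG bG.
have O1 := semi3abelian_Ohm1 sG pG.
have /LdivP[xG x3] : x \in 'Ldiv_3(G) by rewrite -O1.
have cKK := semi3abelian_class_abelian sG xG x3.
have nKG : G \subset 'N(<<x ^: G>>) := norms_gen (class_norm x G).
have sKO : <<x ^: G>> \subset 'Ohm_1(G).
  rewrite gen_subG; apply/subsetP=> _ /imsetP[g gG ->].
  by rewrite memJ_norm // (subsetP (normal_norm (Ohm_normal 1 G))).
apply: (engel2_commgC cKK nKG _ (mem_gen (class_refl G x)) aG bG) => u g uK gG.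
have /LdivP[uG u3] : u \in 'Ldiv_3(G) by rewrite -O1 (subsetP sKO).
exact: abelian_exp3_engel cKK (subsetP nKG g gG) uK u3 (semi3abelian_conj_cycle sG uG gG u3).
Qed.
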